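(* Let $s\ge 1$ and let $i,j$ be integers with $0\le i\le s$, $s\le j\le 2s$ and $(i,j)\ne(s,s)$. Then $$(-1)^{s+i+j}\binom{2s}{j}\sum_{i'=0}^{s}(-1)^{i'}\binom{j-i'-1}{s}\binom{s}{i-i'}+(-1)^{i+j+1}(2s-i)\binom{2s}{i}\sum_{j'=0}^{s}\sum_{t=0}^{i}\frac{(-1)^{t+j'}}{2s-t}\binom{i}{t}\binom{s-t-1+j'}{j'}\binom{s}{j-j'}=0.$$
   Context: For an integer $b\ge 0$ and any integer $a$, $\binom{a}{b}=a(a-1)\cdots(a-b+1)/b!$, and $\binom{a}{b}=0$ for $b<0$. *)

From mathcomp Require Import all_boot all_order all_algebra.
Set Implicit Arguments. Unset Strict Implicit. Unset Printing Implicit Defensive.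
Import Order.TTheory GRing.Theory Num.Theory.
Local Open Scope ring_scope.

Definition gbinom (a b : int) : rat :=
  if b < 0 then 0
  else (\prod_(k < `|b|%N) (a%:~R - (k%:R : rat))) / ((`|b|%N)`!)%:R.

(* Write P = sum_{r=0}^{s} (-1)^r C(r-1,i) C(j,r).  The first sum of the
   identity is (-1)^s P: both obey the same recurrence in i, coming from
   Pascal's rule, and they agree at i = 0 by the partial alternating sum
   sum_{r<=s} (-1)^r C(j,r) = (-1)^s C(j-1,s).

   In the double sum, upper negation turns C(s-t-1+j', j') into
   (-1)^j' C(t-s, j').  An induction on i, driven by Pascal's rule for C(i,t)
   and started by the alternating Vandermonde identity, rewrites
   sum_t (-1)^t C(i,t) C(t-c,k) / (a-t) as sum_r w_r C(a-c-r, k-r) with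
   w_r = (-1)^r C(r-1,i) C(a,r) / ((a-i) C(a,i)).  For a = 2s and c = s the
   sum over j' then collapses by Vandermonde's convolution and
   C(2s,r) C(2s-r,j-r) = C(2s,j) C(j,r), so the double sum equals
   C(2s,j) P / ((2s-i) C(2s,i)) and the two terms cancel. *)

From mathcomp Require Import all_boot all_order all_algebra.
From mathcomp Require Import zify ring.
Set Implicit Arguments.
Unset Strict Implicit.
Unset Printing Implicit Defensive.
Import Order.TTheory GRing.Theory Num.Theory.
Local Open Scope ring_scope.

Lemma natr_fact_neq0 (R : numDomainType) (k : nat) : k`!%:R != 0 :> R.
Proof. by rewrite pnatr_eq0 -lt0n fact_gt0. Qed.

Lemma gbinomE (x : int) (k : nat) :
  gbinom x k = (\prod_(l < k) (x%:~R - l%:R)) / k`!%:R.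
Proof. by []. Qed.

Lemma gbinom_lt0 (x y : int) : y < 0 -> gbinom x y = 0.
Proof. by rewrite /gbinom => ->. Qed.

Lemma gbinom0 (x : int) : gbinom x 0 = 1.
Proof. by rewrite gbinomE big_ord0 fact0 divr1. Qed.

Lemma mul_gbinom_left (x : int) (k : nat) :
  gbinom x k.+1 * k.+1%:R = gbinom x k * (x%:~R - k%:R).
Proof.
rewrite !gbinomE big_ord_recr /= factS natrM.
have := natr_fact_neq0 rat k; have : k.+1%:R != 0 :> rat by rewrite pnatr_eq0.
by rewrite -natr1 => ? ?; field; apply/andP.
Qed.

Lemma gbinomSS (x : int) (k : nat) :
  gbinom (x + 1) k.+1 = gbinom x k.+1 + gbinom x k.
Proof.
rewrite !gbinomE big_ord_recl big_ord_recr /= factS natrM.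
have -> : \prod_(l < k) ((x + 1)%:~R - (bump 0 l)%:R) = \prod_(l < k) (x%:~R - l%:R :> rat).
  by apply: eq_bigr => l _; rewrite /bump add1n intrD -natr1; ring.
have := natr_fact_neq0 rat k; have : k.+1%:R != 0 :> rat by rewrite pnatr_eq0.
by rewrite intrD -natr1 => ? ?; field; apply/andP.
Qed.

Lemma gbinomS (x y : int) : gbinom (x + 1) y = gbinom x y + gbinom x (y - 1).
Proof.
case: y => [[|k]|k].
- by rewrite !gbinom0 gbinom_lt0 ?addr0.
- by rewrite (_ : Posz k.+1 - 1 = k) ?gbinomSS //; lia.
- by rewrite !gbinom_lt0 ?addr0 //; lia.
Qed.

Lemma gbinom_nat (n k : nat) : gbinom n k = 'C(n, k)%:R.
Proof.
elim: n k => [|n IHn] [|k]; rewrite ?gbinom0 ?bin0 //.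
- by rewrite gbinomE big_ord_recl subr0 !mul0r.
- by rewrite (_ : Posz n.+1 = n%:Z + 1) ?gbinomSS ?IHn ?binS ?natrD //; lia.
Qed.

Lemma gbinom_small (n k : nat) : (n < k)%N -> gbinom n k = 0.
Proof. by move=> lt_nk; rewrite gbinom_nat bin_small. Qed.

Lemma gbinom0n (y : int) : gbinom 0%N y = (y == 0)%:R.
Proof.
case: y => [k|k]; first by rewrite gbinom_nat bin0n.
by rewrite gbinom_lt0.
Qed.

Lemma gbinom_upper_neg (x : int) (k : nat) :
  gbinom x k = (-1) ^+ k * gbinom (k%:Z - x - 1) k.
Proof.
rewrite !gbinomE mulrA; congr (_ / _).
rewrite [in RHS](reindex_inj rev_ord_inj) /=.
have -> : \prod_(l < k) ((k%:Z - x - 1)%:~R - (k - l.+1)%:R)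
          = \prod_(l < k) - (x%:~R - l%:R) :> rat.
  apply: eq_bigr => l _; rewrite natrB; last by case: l.
  by rewrite !intrD intrN -!natr1; ring.
by rewrite prodrN card_ord signrMK.
Qed.

Lemma mul_gbinom_down (n k : nat) :
  gbinom n k * n.+1%:R = (n.+1%:R - k%:R) * gbinom n.+1 k.
Proof.
have [le_kn1|lt_n1k] := leqP k n.+1; last by rewrite !gbinom_small ?mul0r ?mulr0 //; lia.
by rewrite !gbinom_nat -natrM mulnC -[n in 'C(n, k)]/(n.+1.-1) mul_bin_down natrM natrB.
Qed.

Lemma sum_gbinom0n (N q : nat) (F : nat -> rat) :
  \sum_(l < N) gbinom 0%N (l%:Z - q%:Z) * F l = (q < N)%:R * F q.
Proof.
elim: N => [|N IHN]; first by rewrite big_ord0 mul0r.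
rewrite big_ord_recr /= IHN gbinom0n subr_eq0 eqz_nat [(q < N.+1)%N]ltnS.
by case: (ltngtP q N) => [_|_|->] /=; rewrite ?mul0r ?add0r ?addr0.
Qed.

Lemma gbinom_vandermonde (p r N : nat) (x k : int) : (p + r < N)%N ->
  \sum_(l < N) gbinom p (l%:Z - r%:Z) * gbinom x (k - l%:Z)
  = gbinom (p%:Z + x) (k - r%:Z).
Proof.
elim: p r x k => [|p IHp] r x k lt_prN.
  rewrite (sum_gbinom0n _ _ (fun l => gbinom x (k - l%:Z))) add0r.
  by rewrite (_ : (r < N)%N) ?mul1r //; lia.
rewrite (_ : Posz p.+1 = p%:Z + 1); last by lia.
under eq_bigr do rewrite gbinomS mulrDl.
rewrite big_split /= IHp; last by lia.
have shift (l : nat) : l%:Z - r%:Z - 1 = l%:Z - r.+1%:Z by lia.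
under eq_bigr do rewrite shift.
rewrite IHp; last by lia.
rewrite (_ : p%:Z + 1 + x = (p%:Z + x) + 1) ?gbinomS; last by ring.
by congr (_ + gbinom _ _); lia.
Qed.

Lemma gbinom_alt_vandermonde (a q N : nat) (d k : int) : k < N%:Z ->
  \sum_(r < N) (-1) ^+ r * gbinom a (r%:Z - q%:Z) * gbinom (d - r%:Z) (k - r%:Z)
  = (-1) ^+ q * gbinom (d - q%:Z - a%:Z) (k - q%:Z).
Proof.
elim: a q d => [|a IHa] q d lt_kN.
  under eq_bigr do rewrite -mulrA mulrCA.
  rewrite (sum_gbinom0n _ _ (fun r => (-1) ^+ r * gbinom (d - r%:Z) (k - r%:Z))) subr0.
  have [lt_qN|le_Nq] := ltnP q N; first by rewrite mul1r.
  by rewrite mul0r gbinom_lt0 ?mulr0 //; lia.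
rewrite (_ : Posz a.+1 = a%:Z + 1); last by lia.
under eq_bigr do rewrite gbinomS mulrDr mulrDl.
rewrite big_split /= IHa //.
have shift (r : nat) : r%:Z - q%:Z - 1 = r%:Z - q.+1%:Z by lia.
under eq_bigr do rewrite shift.
rewrite IHa // exprS.
rewrite (_ : d - q%:Z - a%:Z = (d - q%:Z - (a%:Z + 1)) + 1) ?gbinomS; last by ring.
rewrite (_ : d - q.+1%:Z - a%:Z = d - q%:Z - (a%:Z + 1)); last by lia.
by rewrite (_ : k - q.+1%:Z = k - q%:Z - 1); [ring | lia].
Qed.

Lemma sum_alt_gbinom (x : int) (n : nat) :
  \sum_(r < n.+1) (-1) ^+ r * gbinom x r = (-1) ^+ n * gbinom (x - 1) n.
Proof.
elim: n => [|n IHn]; first by rewrite big_ord_recl big_ord0 !gbinom0 addr0.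
rewrite big_ord_recr /= IHn.
by rewrite -[in gbinom x n.+1](subrK 1 x) gbinomSS exprS; ring.
Qed.

Definition Psum (s i : nat) (j : int) : rat :=
  \sum_(r < s.+1) (-1) ^+ r * gbinom (r%:Z - 1) i * gbinom j r.

Definition Qsum (s i : nat) (j : int) : rat :=
  \sum_(k < s.+1) (-1) ^+ k * gbinom (j - k%:Z - 1) s * gbinom s (i%:Z - k%:Z).

Lemma PsumS (s i : nat) (j : int) :
  Psum s i.+1 j = (-1) ^+ s * gbinom (j - 1) s * gbinom s i.+1 - Psum s i (j - 1).
Proof.
apply/eqP; rewrite eq_sym subr_eq eq_sym; apply/eqP; rewrite /Psum.
set T := fun r : nat => (-1) ^+ r * gbinom r i.+1 * gbinom (j - 1) r.
have pascal_j (r : nat) : gbinom j r = gbinom (j - 1) r + gbinom (j - 1) (r%:Z - 1).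
  by rewrite -gbinomS subrK.
under eq_bigr do rewrite pascal_j mulrDr.
rewrite big_split /= addrAC -big_split /=.
have -> : \sum_(r < s.+1) ((-1) ^+ r * gbinom (r%:Z - 1) i.+1 * gbinom (j - 1) r
            + (-1) ^+ r * gbinom (r%:Z - 1) i * gbinom (j - 1) r) = \sum_(r < s.+1) T r.
  by apply: eq_bigr => r _; rewrite /T -[in gbinom r](subrK 1 r%:Z) gbinomSS; ring.
have -> : \sum_(r < s.+1) (-1) ^+ r * gbinom (r%:Z - 1) i.+1 * gbinom (j - 1) (r%:Z - 1)
          = - \sum_(r < s) T r.
  rewrite big_ord_recl /= [gbinom (j - 1) _]gbinom_lt0 // mulr0 add0r -sumrN.
  apply: eq_bigr => r _; rewrite /T /bump add1n exprS.
  by rewrite (_ : r.+1%:Z - 1 = r); [ring | lia].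
by rewrite big_ord_recr /= addrAC subrr add0r /T mulrAC.
Qed.

Lemma QsumS (s i : nat) (j : int) : (i < s)%N ->
  Qsum s i.+1 j = gbinom (j - 1) s * gbinom s i.+1 - Qsum s i (j - 1).
Proof.
move=> lt_is; rewrite /Qsum big_ord_recl big_ord_recr /=.
rewrite [gbinom s (i%:Z - s%:Z)]gbinom_lt0; last by lia.
rewrite !subr0 mulr0 addr0 expr0 mul1r -sumrN; congr (_ + _).
apply: eq_bigr => k _; rewrite /bump add1n exprS.
rewrite (_ : j - k.+1%:Z - 1 = j - 1 - k%:Z - 1); last by lia.
by rewrite (_ : i.+1%:Z - k.+1%:Z = i%:Z - k%:Z); [ring | lia].
Qed.

Lemma Psum_Qsum (s i : nat) (j : int) : (i <= s)%N ->
  Psum s i j = (-1) ^+ s * Qsum s i j.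
Proof.
elim: i j => [|i IHi] j le_is.
  rewrite /Psum /Qsum [in RHS]big_ord_recl [in RHS]big1 => [|k _]; last first.
    by rewrite [gbinom s _]gbinom_lt0 ?mulr0 //; lia.
  under eq_bigr do rewrite gbinom0 mulr1.
  by rewrite sum_alt_gbinom !subr0 gbinom0 expr0 mul1r mulr1.
rewrite PsumS QsumS // IHi; last by lia.
by rewrite mulrBr !mulrA.
Qed.

Definition alt_frac_weight (a i r : nat) : rat :=
  (-1) ^+ r * gbinom (r%:Z - 1) i * gbinom a r / ((a%:R - i%:R) * gbinom a i).

Lemma alt_frac_weightS (a i r : nat) : (i < a)%N ->
  alt_frac_weight a.+1 i r - alt_frac_weight a i r = alt_frac_weight a.+1 i.+1 r.
Proof.
move=> lt_ia; rewrite /alt_frac_weight.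
have natS_neq0 (n : nat) : n.+1%:R != 0 :> rat by rewrite pnatr_eq0.
have subn_neq0 (m n : nat) : (n < m)%N -> m%:R - n%:R != 0 :> rat.
  by move=> lt_nm; rewrite subr_eq0 eqr_nat neq_ltn lt_nm orbT.
have bin_neq0 : gbinom a.+1 i != 0 by rewrite gbinom_nat pnatr_eq0 -lt0n bin_gt0; lia.
(* Express every binomial through C(r-1,i), C(a+1,i) and C(a+1,r). *)
rewrite (canRL (mulfK (natS_neq0 i)) (mul_gbinom_left (r%:Z - 1) i)).
rewrite (canRL (mulfK (natS_neq0 i)) (mul_gbinom_left a.+1 i)).
rewrite (canRL (mulfK (natS_neq0 a)) (mul_gbinom_down a i)).
rewrite (canRL (mulfK (natS_neq0 a)) (mul_gbinom_down a r)).
rewrite intrD /=; field.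
by rewrite !nat1r !natS_neq0 bin_neq0 !subn_neq0 // ltnS ltnW.
Qed.

Lemma sum_alt_frac_gbinom (i a N : nat) (c k : int) : (i < a)%N -> k < N%:Z ->
  \sum_(t < i.+1) (-1) ^+ t / (a%:R - t%:R) * gbinom i t * gbinom (t%:Z - c) k
  = \sum_(r < N) alt_frac_weight a i r * gbinom (a%:Z - c - r%:Z) (k - r%:Z).
Proof.
elim: i a c => [|i IHi] a c lt_ia lt_kN.
  have weight0 (r : nat) : alt_frac_weight a 0%N r = (-1) ^+ r * gbinom a (r%:Z - 0%:Z) / a%:R.
    by rewrite /alt_frac_weight !gbinom0 !subr0 !mulr1.
  rewrite big_ord1 gbinom0 !subr0 sub0r.
  under eq_bigr do rewrite weight0 mulrAC.
  rewrite -mulr_suml gbinom_alt_vandermonde // !subr0.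
  by rewrite (_ : a%:Z - c - a%:Z = - c); ring.
case: a lt_ia => [//|a] lt_ia.
have pascal_i (t : nat) : gbinom i.+1 t = gbinom i t + gbinom i (t%:Z - 1).
  by rewrite -gbinomS; congr gbinom; lia.
under eq_bigr do rewrite pascal_i mulrDr mulrDl.
rewrite big_split /= big_ord_recr /= gbinom_small // mulr0 mul0r addr0.
rewrite IHi //; last by lia.
rewrite big_ord_recl /= [gbinom i (0%:Z - 1)]gbinom_lt0 // mulr0 mul0r add0r.
have -> : \sum_(t < i.+1) (-1) ^+ bump 0 t / (a.+1%:R - (bump 0 t)%:R)
              * gbinom i ((bump 0 t)%:Z - 1) * gbinom ((bump 0 t)%:Z - c) k
          = - \sum_(t < i.+1) (-1) ^+ t / (a%:R - t%:R) * gbinom i t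
              * gbinom (t%:Z - (c - 1)) k.
  rewrite -sumrN; apply: eq_bigr => t _; rewrite /bump add1n exprS.
  rewrite (_ : t.+1%:Z - 1 = t); last by lia.
  rewrite (_ : t.+1%:Z - c = t%:Z - (c - 1)); last by lia.
  by rewrite -!natr1 (_ : a%:R + 1 - (t%:R + 1) = a%:R - t%:R :> rat); ring.
rewrite IHi // -sumrB; apply: eq_bigr => r _.
rewrite (_ : a%:Z - (c - 1) - r%:Z = a.+1%:Z - c - r%:Z); last by lia.
by rewrite -mulrBl alt_frac_weightS.
Qed.

Lemma natr_bin (n k : nat) : (k <= n)%N ->
  'C(n, k)%:R = n`!%:R / (k`!%:R * (n - k)`!%:R) :> rat.
Proof.
move=> le_kn; rewrite -(bin_fact le_kn) !natrM mulfK //.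
by rewrite mulf_neq0 ?natr_fact_neq0.
Qed.

Lemma mul_bin_trinomial (n j r : nat) : (r <= j)%N -> (j <= n)%N ->
  ('C(n, r) * 'C(n - r, j - r) = 'C(n, j) * 'C(j, r))%N.
Proof.
move=> le_rj le_jn; apply/eqP; rewrite -(eqr_nat rat) !natrM.
rewrite !natr_bin ?leq_sub2r ?(leq_trans le_rj le_jn) //.
rewrite (_ : n - r - (j - r) = n - j)%N; last by lia.
by apply/eqP; field; rewrite !natr_fact_neq0.
Qed.

Lemma gbinom_trinomial_convolution (m n r j N : nat) :
  (r <= j)%N -> (j <= m + n)%N -> (r <= m)%N -> (m < N)%N ->
  gbinom (m + n)%N r * \sum_(l < N) gbinom n (j%:Z - l%:Z) * gbinom (m - r)%N (l%:Z - r%:Z)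
  = gbinom (m + n)%N j * gbinom j r.
Proof.
move=> le_rj le_jmn le_rm lt_mN.
under eq_bigr do rewrite mulrC.
rewrite gbinom_vandermonde; last by lia.
rewrite (_ : (m - r)%N%:Z + n = (m + n - r)%N); last by lia.
rewrite (_ : j%:Z - r%:Z = (j - r)%N); last by lia.
by rewrite !gbinom_nat -!natrM mul_bin_trinomial.
Qed.

Lemma gbinom_double_sum_Psum (s i j : nat) :
  (i < 2 * s)%N -> (s <= j)%N -> (j <= 2 * s)%N ->
  ((2 * s)%:R - i%:R) * gbinom (2 * s)%:Z i%:Z *
    (\sum_(0 <= j' < s.+1) \sum_(0 <= t < i.+1)
        (-1) ^+ (t + j') / ((2 * s)%:R - t%:R) * gbinom i%:Z t%:Z
          * gbinom (s%:Z - t%:Z - 1 + j'%:Z) j'%:Z * gbinom s%:Z (j%:Z - j'%:Z))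
  = gbinom (2 * s)%:Z j%:Z * Psum s i j.
Proof.
move=> lt_i2s le_sj le_j2s.
set K := _ * gbinom _ _.
have K_neq0 : K != 0.
  rewrite mulf_neq0 // ?subr_eq0 ?eqr_nat ?gbinom_nat ?pnatr_eq0 -?lt0n ?bin_gt0; lia.
have inner_sum (j' : nat) : (j' < s.+1)%N ->
    \sum_(0 <= t < i.+1) (-1) ^+ (t + j') / ((2 * s)%:R - t%:R) * gbinom i t
        * gbinom (s%:Z - t%:Z - 1 + j'%:Z) j' * gbinom s (j%:Z - j'%:Z)
    = gbinom s (j%:Z - j'%:Z) * \sum_(r < s.+1) alt_frac_weight (2 * s) i r
        * gbinom ((2 * s)%N%:Z - s%:Z - r%:Z) (j'%:Z - r%:Z).
  move=> lt_j's; rewrite -sum_alt_frac_gbinom //.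
  rewrite big_mkord mulr_sumr; apply: eq_bigr => t _.
  rewrite [gbinom (t%:Z - s%:Z) _]gbinom_upper_neg.
  rewrite (_ : j'%:Z - (t%:Z - s%:Z) - 1 = s%:Z - t%:Z - 1 + j'%:Z); last by ring.
  by rewrite exprD; ring.
rewrite big_mkord; under eq_bigr => j' _ do rewrite (inner_sum _ (ltn_ord j')).
rewrite mulr_sumr; under eq_bigr do rewrite mulr_sumr mulr_sumr.
rewrite exchange_big /Psum mulr_sumr; apply: eq_bigr => -[r /= lt_rs] _.
have weightK : alt_frac_weight (2 * s) i r * K
               = (-1) ^+ r * gbinom (r%:Z - 1) i * gbinom (2 * s)%N r.
  by rewrite /alt_frac_weight divfK.
transitivity (alt_frac_weight (2 * s) i r * K * \sum_(j' < s.+1)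
    gbinom s (j%:Z - j'%:Z) * gbinom (s - r)%N (j'%:Z - r%:Z)).
  rewrite !mulr_sumr; apply: eq_bigr => j' _.
  by rewrite (_ : (2 * s)%N%:Z - s%:Z - r%:Z = (s - r)%N); [ring | lia].
rewrite weightK -[LHS]mulrA (_ : (2 * s)%N = (s + s)%N); last by lia.
by rewrite gbinom_trinomial_convolution; [ring | lia ..].
Qed.

Theorem proposition8 (s i j : nat) :
  (1 <= s)%N -> (i <= s)%N -> (s <= j)%N -> (j <= 2 * s)%N -> (i, j) != (s, s) ->
  (-1 : rat) ^+ (s + i + j) * gbinom (2 * s)%:Z j%:Z *
    (\sum_(0 <= i' < s.+1)
        (-1) ^+ i' * gbinom (j%:Z - i'%:Z - 1) s%:Z * gbinom s%:Z (i%:Z - i'%:Z))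
  + (-1 : rat) ^+ (i + j + 1) * ((2 * s)%:R - i%:R) * gbinom (2 * s)%:Z i%:Z *
    (\sum_(0 <= j' < s.+1) \sum_(0 <= t < i.+1)
        (-1) ^+ (t + j') / ((2 * s)%:R - t%:R) * gbinom i%:Z t%:Z
          * gbinom (s%:Z - t%:Z - 1 + j'%:Z) j'%:Z * gbinom s%:Z (j%:Z - j'%:Z))
  = 0.
Proof.
move=> s_gt0 le_is le_sj le_j2s _.
have lt_i2s : (i < 2 * s)%N by lia.
have := gbinom_double_sum_Psum lt_i2s le_sj le_j2s.
set D := \sum_(0 <= j' < s.+1) _ => D_eq.
rewrite big_mkord -/(Qsum s i j).
transitivity ((-1) ^+ (s + i + j) * gbinom (2 * s)%:Z j%:Z * Qsum s i j
  + (-1) ^+ (i + j + 1) * (((2 * s)%:R - i%:R) * gbinom (2 * s)%:Z i%:Z * D)); first ring.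
by rewrite D_eq Psum_Qsum // !exprD; ring.
Qed.
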